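(* Let $(R,\mathfrak{m},k)$ be a commutative Noetherian local ring and let $n$ be a positive integer. Let $x_1,\dots,x_n,y\in\mathfrak{m}$ be elements such that the ideal $(x_1,x_2,\dots,x_n,y)$ has minimal number of generators $n+1$. Let $p,q\in R$ satisfy $(x_1+py,x_2,\dots,x_n)=(x_1+qy,x_2,\dots,x_n)$ as ideals of $R$. Then $\overline p=\overline q$ in $k=R/\mathfrak{m}$. *)

From mathcomp Require Import all_boot all_algebra.
Set Implicit Arguments. Unset Strict Implicit. Unset Printing Implicit Defensive.
Import GRing.Theory.
Local Open Scope ring_scope.

Section CommAlg.
Variable R : comNzRingType.

Definition is_ideal (I : R -> Prop) : Prop :=
  [/\ I 0, (forall a b, I a -> I b -> I (a + b)) &
      (forall r a, I a -> I (r * a))].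

Definition same_ideal (I J : R -> Prop) : Prop := forall r, I r <-> J r.

Definition ideal_gen (s : seq R) : R -> Prop :=
  fun r => exists c : seq R, size c = size s /\
             r = \sum_(i < size s) c`_i * s`_i.

Definition noetherian : Prop :=
  forall I, is_ideal I -> exists s : seq R, same_ideal I (ideal_gen s).

Definition proper_ideal (I : R -> Prop) : Prop := is_ideal I /\ ~ I 1.

Definition maximal_ideal (m : R -> Prop) : Prop :=
  proper_ideal m /\
  forall J, proper_ideal J -> (forall r, m r -> J r) -> same_ideal J m.

Definition local_ring_with (m : R -> Prop) : Prop :=
  maximal_ideal m /\ forall m', maximal_ideal m' -> same_ideal m' m.

Definition min_num_gens (I : R -> Prop) (n : nat) : Prop :=
  (exists s : seq R, size s = n /\ same_ideal I (ideal_gen s)) /\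
  (forall s : seq R, same_ideal I (ideal_gen s) -> (n <= size s)%N).

End CommAlg.

(* Write the hypothesis as x1 + p y = a (x1 + q y) + w with w in (x2, ..., xn),
   i.e. (p - a q) y + (1 - a) x1 = w.  If 1 - a is a unit, x1 is redundant among
   the generators x1, ..., xn, y; otherwise p - q is congruent to p - a q modulo m,
   so if p - q were a unit then so would be p - a q, and y would be redundant.
   Either way the ideal would need fewer than n + 1 generators.  Units are the
   elements outside m because, R being Noetherian, every proper ideal lies in a
   maximal ideal, which can only be m. *)

From Pilot Require Import Defs.
From mathcomp Require Import all_boot all_algebra.
From mathcomp Require Import ring.
From Stdlib Require Import Classical ClassicalEpsilon.
Set Implicit Arguments. Unset Strict Implicit.
Import GRing.Theory.
Local Open Scope ring_scope.

Section Ideals.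
Variable R : comNzRingType.
Implicit Types (a b r u v z : R) (I J : R -> Prop) (s t : seq R).

Lemma idealN I a : is_ideal I -> I a -> I (- a).
Proof. by move=> [_ _ idM] Ia; rewrite -mulN1r; apply: idM. Qed.

Lemma idealB I a b : is_ideal I -> I a -> I b -> I (a - b).
Proof. by move=> idI Ia Ib; case: (idI) => _ idD _; apply: idD => //; apply: idealN. Qed.

Lemma ideal_unit_mull I u v z : is_ideal I -> v * u = 1 -> I (u * z) -> I z.
Proof. by move=> [_ _ idM] vu1 Iuz; rewrite -[z]mul1r -vu1 -mulrA; apply: idM. Qed.

Lemma ideal_gen_nil r : ideal_gen [::] r <-> r = 0.
Proof.
split; first by case=> c [_ ->]; rewrite big_ord0.
by move=> ->; exists [::]; rewrite big_ord0.
Qed.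

Lemma ideal_gen_cons z s r :
  ideal_gen (z :: s) r <-> exists a w, ideal_gen s w /\ r = a * z + w.
Proof.
split=> [[[|a c] [//= [sz_c] ->]] | [a [w [[c [sz_c ->]] ->]]]].
  by exists a, (\sum_(i < size s) c`_i * s`_i); rewrite big_ord_recl; split=> //; exists c.
by exists (a :: c); rewrite /= sz_c big_ord_recl.
Qed.

Lemma ideal_gen_is_ideal s : is_ideal (ideal_gen s).
Proof.
elim: s => [|z s [id0 idD idM]].
  split=> [|a b|r a]; rewrite ?ideal_gen_nil //.
    by move=> -> ->; rewrite addr0.
  by move=> ->; rewrite mulr0.
split=> [|a b|r a]; rewrite !ideal_gen_cons.
- by exists 0, 0; split; [exact: id0 | ring].
- move=> [a1 [w1 [sw1 ->]]] [a2 [w2 [sw2 ->]]].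
  by exists (a1 + a2), (w1 + w2); split; [apply: idD | ring].
- move=> [a1 [w1 [sw1 ->]]].
  by exists (r * a1), (r * w1); split; [apply: idM | ring].
Qed.

Lemma ideal_gen_consr z s r : ideal_gen s r -> ideal_gen (z :: s) r.
Proof. by move=> sr; apply/ideal_gen_cons; exists 0, r; rewrite mul0r add0r. Qed.

Lemma mem_ideal_gen s z : z \in s -> ideal_gen s z.
Proof.
elim: s => [//|z' s IH]; rewrite in_cons => /orP [/eqP ->|sz].
  apply/ideal_gen_cons; exists 1, 0; rewrite mul1r addr0; split=> //.
  by case: (ideal_gen_is_ideal s).
exact/ideal_gen_consr/IH.
Qed.

Lemma ideal_gen_sub s I : is_ideal I ->
  (forall z, z \in s -> I z) -> forall r, ideal_gen s r -> I r.
Proof.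
move=> [I0 idD idM]; elim: s => [|z s IH] sI r; first by move/ideal_gen_nil ->.
case/ideal_gen_cons => a [w [sw ->]]; apply: idD; first by apply/idM/sI/mem_head.
by apply: IH sw => z' sz'; apply: sI; rewrite in_cons sz' orbT.
Qed.

Lemma ideal_gen_perm s t : perm_eq s t -> same_ideal (ideal_gen s) (ideal_gen t).
Proof.
move=> st r; split; apply: ideal_gen_sub; try exact: ideal_gen_is_ideal.
  by move=> z; rewrite (perm_mem st); apply: mem_ideal_gen.
by move=> z; rewrite -(perm_mem st); apply: mem_ideal_gen.
Qed.

Lemma ideal_gen_cons_redundant z s :
  ideal_gen s z -> same_ideal (ideal_gen (z :: s)) (ideal_gen s).
Proof.
move=> sz r; split; last exact: ideal_gen_consr.
have [_ idD idM] := ideal_gen_is_ideal s.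
by case/ideal_gen_cons => a [w [sw ->]]; apply: idD => //; apply: idM.
Qed.

Lemma min_num_gens_same_ideal I J k :
  same_ideal I J -> min_num_gens I k -> min_num_gens J k.
Proof.
move=> IJ [[s [sz_s Is]] min_k]; split.
  by exists s; split=> // r; rewrite -IJ.
by move=> t Jt; apply: min_k => r; rewrite IJ.
Qed.

Lemma min_num_gens_irredundant z s :
  min_num_gens (ideal_gen (z :: s)) (size s).+1 -> ~ ideal_gen s z.
Proof.
by move=> [_ min_k] sz; have := min_k _ (ideal_gen_cons_redundant sz); rewrite ltnn.
Qed.

End Ideals.

Section Noetherian.
Variable R : comNzRingType.
Hypothesis noethR : noetherian R.

Lemma noetherian_chain_stationary (I : nat -> R -> Prop) :
  (forall k, is_ideal (I k)) -> (forall k r, I k r -> I k.+1 r) ->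
  exists k, forall r, I k.+1 r -> I k r.
Proof.
move=> idI incI.
have leI k k' r : (k <= k')%N -> I k r -> I k' r.
  by move=> /subnK <-; elim: (k' - k)%N => // d IH /IH /incI.
pose U r := exists k, I k r.
have idU : is_ideal U.
  split=> [|a b [k1 Ia] [k2 Ib]|r a [k Ia]]; first by exists 0%N; case: (idI 0%N).
    exists (maxn k1 k2); case: (idI (maxn k1 k2)) => _ idD _.
    by apply: idD; [apply: leI Ia; rewrite leq_maxl | apply: leI Ib; rewrite leq_maxr].
  by exists k; case: (idI k) => _ _ idM; apply: idM.
have [s genU] := noethR idU.
have [K sK] : exists K, forall z, z \in s -> I K z.
  have : forall z, z \in s -> U z by move=> z /mem_ideal_gen /genU.
  elim: s {genU} => [|z s IH] sU; first by exists 0%N.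
  have [K1 sK1] : exists K, forall z, z \in s -> I K z.
    by apply: IH => z' sz'; apply: sU; rewrite in_cons sz' orbT.
  have [K2 zK2] := sU z (mem_head _ _).
  exists (maxn K1 K2) => z'; rewrite in_cons => /orP [/eqP ->|sz'].
    by apply: leI zK2; rewrite leq_maxr.
  by apply: leI (sK1 _ sz'); rewrite leq_maxl.
by exists K => r IK1r; apply: (ideal_gen_sub (idI K) sK); apply/genU; exists K.+1.
Qed.

(* Without a maximal ideal above I one could choose a strictly increasing chain
   of proper ideals starting at I, contradicting stationarity. *)
Lemma exists_maximal_ideal (I : R -> Prop) :
  Defs.proper_ideal I -> exists M, maximal_ideal M /\ forall r, I r -> M r.
Proof.
move=> propI; apply: NNPP => noM.
have grow J : exists K, Defs.proper_ideal J -> (forall r, I r -> J r) ->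
    [/\ Defs.proper_ideal K, forall r, J r -> K r & exists r, K r /\ ~ J r].
  have [[propJ IJ] | notJ] := classic (Defs.proper_ideal J /\ forall r, I r -> J r);
    last by exists J => propJ IJ; case: notJ.
  apply: NNPP => noK; apply: noM; exists J; split=> //; split=> // K propK JK r.
  split=> [Kr|]; last exact: JK.
  apply: NNPP => nJr; apply: noK; exists K => _ _; split=> //; by exists r.
have [nxt Hnxt] := choice _ grow.
pose ch k := iter k nxt I.
have ch_ok k : Defs.proper_ideal (ch k) /\ forall r, I r -> ch k r.
  elim: k => [|k [propk Ik]] //=.
  by have [propk1 kk1 _] := Hnxt _ propk Ik; split=> // r /Ik /kk1.
have incr k r : ch k r -> ch k.+1 r.
  by have [propk Ik] := ch_ok k; have [_ kk1 _] := Hnxt _ propk Ik; apply: kk1.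
have [k stat] := noetherian_chain_stationary (fun k => (ch_ok k).1.1) incr.
have [propk Ik] := ch_ok k; have [_ _ [r [k1r nkr]]] := Hnxt _ propk Ik.
exact: nkr (stat r k1r).
Qed.

End Noetherian.

Section NoetherianLocal.
Variables (R : comNzRingType) (m : R -> Prop).
Hypotheses (noethR : noetherian R) (locR : local_ring_with m).

Lemma local_ring_notin_unit u : ~ m u -> exists v, v * u = 1.
Proof.
move=> mu; apply: NNPP => nounit.
pose Ru r := exists v, r = v * u.
have propRu : Defs.proper_ideal Ru.
  split; last by case=> v /esym vu1; apply: nounit; exists v.
  split=> [|a b [va ->] [vb ->]|r a [va ->]]; first by exists 0; rewrite mul0r.
    by exists (va + vb); rewrite mulrDl.
  by exists (r * va); rewrite mulrA.
have [M [maxM RuM]] := exists_maximal_ideal noethR propRu.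
by apply/mu/(locR.2 M maxM)/RuM; exists 1; rewrite mul1r.
Qed.

Lemma local_perturbed_generator_congr x1 y p q ks :
  ~ ideal_gen (x1 :: ks) y -> ~ ideal_gen (y :: ks) x1 ->
  same_ideal (ideal_gen (x1 + p * y :: ks)) (ideal_gen (x1 + q * y :: ks)) ->
  m (p - q).
Proof.
move=> y_irr x1_irr same_pq.
have idm : is_ideal m by case: locR => [[[]]].
have /ideal_gen_cons [a [w [ksw Ew]]] : ideal_gen (x1 + q * y :: ks) (x1 + p * y).
  by apply/same_pq/mem_ideal_gen/mem_head.
have Eyx : (p - a * q) * y + (1 - a) * x1 = w.
  by apply: (addrI (a * (x1 + q * y))); rewrite -Ew; ring.
apply: NNPP => npq.
have [m1a | nm1a] := classic (m (1 - a)).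
- have npaq : ~ m (p - a * q).
    move=> mpaq; apply: npq; rewrite (_ : p - q = (p - a * q) - q * (1 - a)); last by ring.
    by apply: idealB => //; case: idm => _ _ idM; apply: idM.
  have [v vu1] := local_ring_notin_unit npaq.
  have idx := ideal_gen_is_ideal (x1 :: ks).
  apply/y_irr/(ideal_unit_mull idx vu1).
  rewrite (_ : _ * y = w - (1 - a) * x1); last by rewrite -Eyx; ring.
  apply: idealB => //; first exact: ideal_gen_consr.
  by case: idx => _ _ idM; apply/idM/mem_ideal_gen/mem_head.
- have [v vu1] := local_ring_notin_unit nm1a.
  have idy := ideal_gen_is_ideal (y :: ks).
  apply/x1_irr/(ideal_unit_mull idy vu1).
  rewrite (_ : _ * x1 = w - (p - a * q) * y); last by rewrite -Eyx; ring.
  apply: idealB => //; first exact: ideal_gen_consr.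
  by case: idy => _ _ idM; apply/idM/mem_ideal_gen/mem_head.
Qed.

End NoetherianLocal.

Theorem lemma3p7 (R : comNzRingType) (m : R -> Prop) (n : nat)
  (x : 'I_n.+1 -> R) (y p q : R) :
  noetherian R -> local_ring_with m ->
  (forall i, m (x i)) -> m y ->
  min_num_gens (ideal_gen (rcons [seq x i | i <- enum 'I_n.+1] y)) n.+2 ->
  same_ideal (ideal_gen [seq (if i == ord0 then x i + p * y else x i) | i <- enum 'I_n.+1])
             (ideal_gen [seq (if i == ord0 then x i + q * y else x i) | i <- enum 'I_n.+1]) ->
  m (p - q).
Proof.
(* Minimality of the generating family is all that is used. *)
move=> noethR locR _ _ min_gens same_pq.
set ks := [seq x (lift ord0 j) | j <- enum 'I_n].
have sz_ks : size ks = n by rewrite size_map size_enum_ord.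
have xsE : [seq x i | i <- enum 'I_n.+1] = x ord0 :: ks.
  by rewrite enum_ordSl /= -map_comp.
have perturbE c : [seq (if i == ord0 then x i + c * y else x i) | i <- enum 'I_n.+1]
    = x ord0 + c * y :: ks.
  by rewrite enum_ordSl /= -map_comp.
have {}min_gens : min_num_gens (ideal_gen (rcons (x ord0 :: ks) y)) (size ks).+2.
  by rewrite sz_ks -xsE.
rewrite !perturbE in same_pq.
apply: (local_perturbed_generator_congr noethR locR _ _ same_pq);
  apply: min_num_gens_irredundant; apply: min_num_gens_same_ideal min_gens;
  apply: ideal_gen_perm.
- by rewrite perm_rcons perm_refl.
- by rewrite /= perm_cons perm_rcons perm_refl.
Qed.
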